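(* Let $n\ge1$ and let $\mathcal P_n$ be the set of peakless weak Dyck paths with exactly $n$ steps of type $U$ or $H$. Executing a path $P\in\mathcal P_n$ with a stack (reading $U$ as push, $D$ as pop, $H$ as direct transfer) is always possible and yields a permutation $S(P)$; the map $S$ is a bijection from $\mathcal P_n$ onto the set of $312$-avoiding permutations of $\{1,\ldots,n\}$. Executing $P$ with a queue (reading $U$ as enqueue, $D$ as dequeue, $H$ as direct transfer) yields a permutation $Q(P)$; the map $Q$ is a bijection from $\mathcal P_n$ onto the set of $321$-avoiding permutations of $\{1,\ldots,n\}$. Consequently $|\mathcal P_n|=C_n=\frac{1}{2n+1}\binom{2n+1}{n+1}$, the number of $321$-avoiding permutations of $\{1,\ldots,n\}$ equals $C_n$, and $Q\circ S^{-1}$ is a bijection from $312$-avoiding permutations onto $321$-avoiding permutations of $\{1,\ldots,n\}$.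
   Context: A weak Dyck path is a finite word in the steps $U=(1,1)$, $D=(1,-1)$, $H=(1,0)$ whose lattice path starts at height $0$, ends at height $0$ and never goes below height $0$. It is peakless if no $U$ is immediately followed by $D$. Executing a path: input is $1,2,\ldots,n$ in order, storage (stack or queue) and output initially empty; the steps are performed in order, where push/enqueue moves the next input element into the storage (top of stack / back of queue), pop/dequeue moves the top of the stack / front of the queue to the end of the output, and direct transfer moves the next input element to the end of the output. A permutation avoids $312$ (resp. $321$) if there are no $i<j<k$ with $p_j<p_k<p_i$ (resp. $p_i>p_j>p_k$). *)

From HB Require Import structures.
From mathcomp Require Import all_boot.
Set Implicit Arguments. Unset Strict Implicit. Unset Printing Implicit Defensive.

(** Steps of a weak Dyck path: U = (1,1), D = (1,-1), H = (1,0). *)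
Inductive step := U | D | H.

Definition step_eqb (a b : step) : bool :=
  match a, b with U, U | D, D | H, H => true | _, _ => false end.
Lemma step_eqP : Equality.axiom step_eqb.
Proof. by case; case; constructor. Qed.
HB.instance Definition _ := hasDecEq.Build step step_eqP.

Definition weak_dyck (P : seq step) : Prop :=
  (forall k, count (pred1 D) (take k P) <= count (pred1 U) (take k P)) /\
  count (pred1 U) P = count (pred1 D) P.

Definition peakless (P : seq step) : Prop :=
  forall i, ~ (nth H P i = U /\ nth H P i.+1 = D).

Definition inPn (n : nat) (P : seq step) : Prop :=
  weak_dyck P /\ peakless P /\ count (fun s => (s == U) || (s == H)) P = n.

(** Execution with a stack (top = head of list). *)
Fixpoint exec_stack (P : seq step) (inp st out : seq nat) : option (seq nat) :=
  match P with
  | [::] => Some out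
  | U :: P' => match inp with x :: inp' => exec_stack P' inp' (x :: st) out | [::] => None end
  | D :: P' => match st with x :: st' => exec_stack P' inp st' (rcons out x) | [::] => None end
  | H :: P' => match inp with x :: inp' => exec_stack P' inp' st (rcons out x) | [::] => None end
  end.

(** Execution with a queue (front = head of list, enqueue at the back). *)
Fixpoint exec_queue (P : seq step) (inp q out : seq nat) : option (seq nat) :=
  match P with
  | [::] => Some out
  | U :: P' => match inp with x :: inp' => exec_queue P' inp' (rcons q x) out | [::] => None end
  | D :: P' => match q with x :: q' => exec_queue P' inp q' (rcons out x) | [::] => None end
  | H :: P' => match inp with x :: inp' => exec_queue P' inp' q (rcons out x) | [::] => None end
  end.

Definition run_stack (n : nat) (P : seq step) := exec_stack P (iota 1 n) [::] [::].
Definition run_queue (n : nat) (P : seq step) := exec_queue P (iota 1 n) [::] [::].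

(** S(P) and Q(P): the output (meaningful when the run succeeds). *)
Definition Smap (n : nat) (P : seq step) : seq nat := odflt [::] (run_stack n P).
Definition Qmap (n : nat) (P : seq step) : seq nat := odflt [::] (run_queue n P).

Definition is_perm (n : nat) (s : seq nat) : Prop := perm_eq s (iota 1 n).

(** Pattern avoidance (positions are 0-based indices into the word). *)
Definition avoids312 (s : seq nat) : Prop :=
  ~ exists i j k, [/\ i < j, j < k, k < size s &
        nth 0 s j < nth 0 s k < nth 0 s i].
Definition avoids321 (s : seq nat) : Prop :=
  ~ exists i j k, [/\ i < j, j < k, k < size s &
        nth 0 s k < nth 0 s j < nth 0 s i].

Definition catalan (n : nat) : nat := 'C(n.*2.+1, n.+1) %/ n.*2.+1.

From HB Require Import structures.
From mathcomp Require Import all_boot zify.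
Set Implicit Arguments. Unset Strict Implicit. Unset Printing Implicit Defensive.

(** Both executions are treated at once: a storage discipline b (stack or
    queue) acts on a path P and the input c, ..., c + m - 1.  The key
    observation is that the output t determines the path: an entry below the
    next input must be popped (D), while an entry x >= c requires pushing
    c, ..., x - 1 and transferring x (U^(x-c) H); this path is [encode c t].
    - A peakless weak Dyck path always runs and is the encoding of its output
      ([exec_path]), so S and Q are injective; conversely the encoding of a
      permutation lies in P_n ([encode_path]).
    - [encode 1 s] outputs s exactly when s avoids the pattern of the storage
      ([exec_encode]), by an induction tracking the storage contents; this
      pattern is 312 for a stack and 321 for a queue ([avoidsP]).
    - |P_n| = C_n, because replacing each H by a peak U D is a bijection onto
      the Dyck words of length 2n, counted by the ballot formula. *)

Notation cU := (count (pred1 U)).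
Notation cD := (count (pred1 D)).
Notation cUH := (count (fun s => (s == U) || (s == H))).

Fixpoint dyck_from (h : nat) (P : seq step) : bool :=
  match P with
  | [::] => h == 0
  | U :: P' => dyck_from h.+1 P'
  | D :: P' => (0 < h) && dyck_from h.-1 P'
  | H :: P' => dyck_from h P'
  end.

Fixpoint no_peak (P : seq step) : bool :=
  match P with
  | [::] => true
  | x :: P' => ~~ ((x == U) && (nth H P' 0 == D)) && no_peak P'
  end.

Lemma dyck_fromP h P : dyck_from h P <->
  (forall k, cD (take k P) <= h + cU (take k P)) /\ h + cU P = cD P.
Proof.
elim: P h => [|x P IH] h /=.
  split; first by move/eqP=> ->; split=> // k; rewrite take_nil.
  by case=> _ /eqP; rewrite addn0.
case: x => /=.
- rewrite IH; split=> -[Hpre Hend]; (split; last by simpl in *; lia).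
    by case=> [|k] //=; have := Hpre k; simpl in *; lia.
  by move=> k; have := Hpre k.+1; simpl in *; lia.
- split.
    case/andP=> h_gt0 /IH [Hpre Hend]; (split; last by simpl in *; lia).
    by case=> [|k] //=; have := Hpre k; simpl in *; lia.
  case=> Hpre Hend; have h_gt0 : 0 < h by have := Hpre 1; rewrite /= take0 /=; lia.
  rewrite h_gt0 IH; split; last by simpl in *; lia.
  by move=> k; have := Hpre k.+1; simpl in *; lia.
- rewrite IH; split=> -[Hpre Hend]; (split; last by simpl in *; lia).
    by case=> [|k] //=; have := Hpre k; simpl in *; lia.
  by move=> k; have := Hpre k.+1; simpl in *; lia.
Qed.

Lemma weak_dyckE P : weak_dyck P <-> dyck_from 0 P.
Proof. by rewrite dyck_fromP. Qed.

Lemma peaklessE P : peakless P <-> no_peak P.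
Proof.
elim: P => [|x P IH] /=.
  by split=> // _ i; rewrite nth_nil; case.
split=> [Hpk | /andP[Hx /IH Hpk] [|i] //=].
  apply/andP; split; last by apply/IH=> i; apply: (Hpk i.+1).
  by apply/negP=> /andP[/eqP Ux /eqP DP]; apply: (Hpk 0).
by case=> Ux DP; move: Hx; rewrite Ux DP.
Qed.

Lemma inPnE n P : inPn n P <-> [/\ dyck_from 0 P, no_peak P & cUH P = n].
Proof.
rewrite /inPn weak_dyckE peaklessE.
by split=> [[? [? ?]] | [? ? ?]].
Qed.

Lemma dyck_from_count h P : dyck_from h P -> h + cU P = cD P.
Proof. by case/dyck_fromP. Qed.

Lemma dyck_from_Us k h P : dyck_from h (nseq k U ++ P) = dyck_from (h + k) P.
Proof. by elim: k h => [|k IH] h /=; rewrite ?addn0 // IH addnS. Qed.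

Lemma no_peak_Us k P : no_peak (nseq k U ++ H :: P) = no_peak P.
Proof. by elim: k => [|[|k] IH]. Qed.

Lemma path_shape h P : dyck_from h P -> no_peak P ->
  [\/ P = [::], exists P', P = D :: P' | exists k P', P = nseq k U ++ H :: P'].
Proof.
elim: P h => [|x P IH] h; first by constructor 1.
case: x => /= [Hd /andP[Hnp Hp] | _ _ | _ _].
- constructor 3; case: (IH _ Hd Hp) => [E | [P' E] | [k [P' E]]].
  + by move: Hd; rewrite E.
  + by move: Hnp; rewrite E.
  + by exists k.+1, P'; rewrite E.
- by constructor 2; exists P.
- by constructor 3; exists 0, P.
Qed.

(** Storing y: a queue ([b = true]) appends at the back, a stack ([b = false])
    puts y on top; both storages are read from the head. *)
Definition store (b : bool) (y : nat) (st : seq nat) : seq nat :=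
  if b then rcons st y else y :: st.

Fixpoint exec (b : bool) (P : seq step) (inp st out : seq nat) : option (seq nat) :=
  match P with
  | [::] => Some out
  | U :: P' => if inp is x :: inp' then exec b P' inp' (store b x st) out else None
  | D :: P' => if st is x :: st' then exec b P' inp st' (rcons out x) else None
  | H :: P' => if inp is x :: inp' then exec b P' inp' st (rcons out x) else None
  end.

Lemma exec_stackE P inp st out : exec_stack P inp st out = exec false P inp st out.
Proof. by elim: P inp st out => [|[] P IH] [|x inp] [|y st] out //=. Qed.

Lemma exec_queueE P inp st out : exec_queue P inp st out = exec true P inp st out.
Proof. by elim: P inp st out => [|[] P IH] [|x inp] [|y st] out //=. Qed.

Lemma exec_out b P inp st out :
  exec b P inp st out = omap (cat out) (exec b P inp st [::]).
Proof.
elim: P inp st out => [|x P IH] inp st out /=; first by rewrite cats0.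
case: x; case: inp => [|y inp]; case: st => [|z st] //=;
  rewrite IH [in RHS]IH; case: (exec _ _ _ _ _) => //= t;
  by rewrite ?cat_rcons.
Qed.

Definition store_block (b : bool) (st : seq nat) (c k : nat) : seq nat :=
  if b then st ++ iota c k else rev (iota c k) ++ st.

Lemma store_block_perm b st c k : perm_eq (store_block b st c k) (st ++ iota c k).
Proof. by case: b; rewrite /store_block // perm_catC perm_cat2l perm_rev. Qed.

Lemma exec_Us b k c m P st out :
  exec b (nseq k U ++ P) (iota c (k + m)) st out =
  exec b P (iota (c + k) m) (store_block b st c k) out.
Proof.
elim: k c st => [|k IH] c st /=.
  by rewrite addn0 /store_block; case: b; rewrite ?cats0.
rewrite IH addSnnS /store_block /store {IH}; case: b => /=.
  by rewrite cat_rcons.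
by rewrite rev_cons cat_rcons.
Qed.

(** [encode c s] is the only path that can output s when c is the next input:
    an entry below c is already stored and must be popped (D), an entry x >= c
    is reached by pushing c, ..., x - 1 and transferring x directly (U^(x-c) H). *)
Fixpoint encode (c : nat) (s : seq nat) : seq step :=
  if s is x :: s' then
    if x < c then D :: encode c s' else nseq (x - c) U ++ H :: encode x.+1 s'
  else [::].

Lemma exec_path b P c m st out :
  dyck_from (size st) P -> no_peak P -> cUH P = m -> all (fun y => y < c) st ->
  exists t, [/\ exec b P (iota c m) st out = Some (out ++ t), encode c t = P
             & perm_eq t (st ++ iota c m)].
Proof.
elim: {P}(size P).+1 {-2}P (ltnSn (size P)) c m st out
  => // N IHN P HN c m st out Hd Hp Hc Hst.
case: (path_shape Hd Hp) => [E | [P' E] | [k [P' E]]]; subst P.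
- move: Hd Hc => /= /eqP/size0nil -> <-.
  by exists [::]; rewrite cats0.
- case: st Hd Hst => [|y st] //= Hd /andP[Hy Hst].
  have [|t [Et Pt permt]] := IHN P' _ c m st (rcons out y) Hd Hp Hc Hst.
    by move: HN => /=; lia.
  by exists (y :: t); rewrite /= Et cat_rcons Hy Pt perm_cons.
move: Hd Hp Hc; rewrite dyck_from_Us no_peak_Us count_cat count_nseq /= => Hd Hp Hc.
set st' := store_block b st c k.
have Hm : m = k + (cUH P').+1 by rewrite -Hc mul1n addnS.
have size_st' : size st' = size st + k.
  by rewrite /st' /store_block; case: (b); rewrite size_cat ?size_rev size_iota // addnC.
have Hst' : all (fun y => y < (c + k).+1) st'.
  apply/allP=> z; rewrite (perm_mem (store_block_perm _ _ _ _)) mem_cat mem_iota.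
  by case/orP=> [/(allP Hst) /=|]; lia.
have Hd' : dyck_from (size st') P' by rewrite size_st'.
have HN' : size P' < N by move: HN; rewrite size_cat size_nseq /=; lia.
have [t [Et Pt permt]] :=
  IHN P' HN' (c + k).+1 (cUH P') st' (rcons out (c + k)) Hd' Hp erefl Hst'.
exists ((c + k) :: t); split.
- by rewrite Hm exec_Us /= Et cat_rcons.
- by rewrite /= ltnNge leq_addr /= addKn Pt.
- rewrite Hm iotaD /= catA perm_sym (perm_catCA _ [:: c + k]) /= perm_cons perm_sym.
  by apply: perm_trans permt _; rewrite perm_cat2r store_block_perm.
Qed.

Lemma encode_path s st c m : uniq s -> perm_eq s (st ++ iota c m) ->
  all (fun y => y < c) st ->
  [/\ dyck_from (size st) (encode c s), no_peak (encode c s) & cUH (encode c s) = m].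
Proof.
elim: s st c m => [|x s IH] st c m Hu Hperm Hst.
  move/perm_size: Hperm; rewrite size_cat size_iota /= => Hs.
  by split => //=; [apply/eqP|]; lia.
move: Hu => /= /andP[Hx Hu].
have x_in : x \in st ++ iota c m by rewrite -(perm_mem Hperm) mem_head.
case: ifP => xc.
- have x_st : x \in st by move: x_in; rewrite mem_cat mem_iota (leqNgt c x) xc /= orbF.
  have Hperm' : perm_eq s (rem x st ++ iota c m).
    by rewrite -(perm_cons x) (perm_trans Hperm) // -cat_cons perm_cat2r perm_to_rem.
  have Hst' : all (fun y => y < c) (rem x st) by apply/allP=> z /mem_rem /(allP Hst).
  have [Hd Hp Hc] := IH _ _ _ Hu Hperm' Hst'.
  move: Hd; rewrite size_rem //= => Hd.
  by split => //=; rewrite Hd andbT -has_predT; apply/hasP; exists x.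
- have x_lt : x < c + m.
    by move: x_in; rewrite mem_cat mem_iota => /orP[/(allP Hst)|/andP[] //]; rewrite /= xc.
  have x_ge : c <= x by rewrite leqNgt xc.
  have Hm : m = (x - c) + (m - (x - c) - 1).+1 by lia.
  have Hperm' : perm_eq s ((st ++ iota c (x - c)) ++ iota x.+1 (m - (x - c) - 1)).
    rewrite -(perm_cons x) (perm_trans Hperm) // {1}Hm iotaD subnKC //=.
    by rewrite catA (perm_catCA _ [:: x]) perm_refl.
  have Hst' : all (fun y => y < x.+1) (st ++ iota c (x - c)).
    by apply/allP=> z; rewrite mem_cat mem_iota; case/orP=> [/(allP Hst) /=|]; lia.
  have [Hd Hp Hc] := IH _ _ _ Hu Hperm' Hst'.
  move: Hd; rewrite size_cat size_iota => Hd.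
  split; [by rewrite dyck_from_Us | by rewrite no_peak_Us |].
  by rewrite count_cat count_nseq /= Hc mul1n; lia.
Qed.

(** The order in which a storage lists entries that were stored in increasing
    order: increasing for a queue, decreasing (top first) for a stack. *)
Definition storage_order (b : bool) : rel nat :=
  if b then (fun x y => x < y) else (fun x y => y < x).

Definition compatible (b : bool) (s : seq nat) : bool :=
  pairwise (fun x y => ~~ storage_order b y x) s.

(** Every entry x is followed by the smaller entries in storage order: for a
    stack this is 312-avoidance, for a queue 321-avoidance. *)
Fixpoint avoids (b : bool) (s : seq nat) : bool :=
  if s is x :: s' then compatible b [seq y <- s' | y < x] && avoids b s' else true.

Lemma storage_order_trans b : transitive (storage_order b).
Proof. by case: b => y x z /=; lia. Qed.
Arguments storage_order_trans : clear implicits.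

Lemma storage_order_compatible b s : pairwise (storage_order b) s -> compatible b s.
Proof. by apply: sub_pairwise; case: b => x y /=; lia. Qed.

Lemma compatible_storage_order b s : uniq s -> compatible b s ->
  pairwise (storage_order b) s.
Proof.
elim: s => [|x s IH] //= /andP[x_s us] /andP[Hx Hs].
rewrite IH // andbT; apply/allP => y ys; have := allP Hx y ys.
have : x != y by apply: contraNneq x_s => ->.
by case: b {IH Hx Hs} => /=; lia.
Qed.

Lemma filter_storage_order b L s : uniq s -> pairwise (storage_order b) L ->
  {subset L <= s} -> ([seq y <- s | y \in L] == L) = compatible b [seq y <- s | y \in L].
Proof.
move=> us sortedL sub_Ls; apply/idP/idP => [/eqP -> | compat].
  exact: storage_order_compatible.
have irr : irreflexive (storage_order b).
  by rewrite /storage_order; case: (b) => x /=; rewrite ltnn.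
apply/eqP; apply: (irr_sorted_eq (storage_order_trans b) irr).
- rewrite sorted_pairwise; last exact: (storage_order_trans b).
  exact: compatible_storage_order (filter_uniq _ us) compat.
- by rewrite sorted_pairwise //; exact: (storage_order_trans b).
- by move=> z; rewrite mem_filter andb_idr //; apply: sub_Ls.
Qed.

Lemma store_block_sorted b st c k : pairwise (storage_order b) st ->
  all (fun y => y < c) st -> pairwise (storage_order b) (store_block b st c k).
Proof.
move=> sorted_st st_c; rewrite /store_block; case: b sorted_st => sorted_st;
  rewrite pairwise_cat sorted_st /= ?andbT.
- rewrite -(sorted_pairwise (storage_order_trans true)) iota_ltn_sorted andbT.
  by apply/allrelP => x y /(allP st_c) /= xc; rewrite mem_iota; lia.
- rewrite -(sorted_pairwise (storage_order_trans false)) rev_sorted iota_ltn_sorted andbT.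
  by apply/allrelP => x y; rewrite mem_rev mem_iota => xc /(allP st_c) /=; lia.
Qed.

Lemma filter_store_block b st c k : all (fun y => y < c) st ->
  [seq y <- store_block b st c k | y \in st] = st.
Proof.
move=> st_c.
have no_block : [seq y <- iota c k | y \in st] = [::].
  rewrite -(filter_pred0 (iota c k)); apply: eq_in_filter => z; rewrite mem_iota /=.
  by move=> /andP[cz _]; apply/negP => /(allP st_c) /=; lia.
have self : [seq y <- st | y \in st] = st by apply/all_filterP/allP.
by rewrite /store_block; case: b; rewrite filter_cat ?filter_rev no_block self ?cats0.
Qed.

Lemma ex_pair_cons (Q : nat -> nat -> bool) (y : nat) s :
  (exists j k, [/\ j < k, k < size (y :: s) & Q (nth 0 (y :: s) j) (nth 0 (y :: s) k)]) <->
  has (Q y) s \/ (exists j k, [/\ j < k, k < size s & Q (nth 0 s j) (nth 0 s k)]).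
Proof.
split=> [[[|j] [[|k] [jk ks HQ]]] // | [/(has_nthP 0) [k ks HQ] | [j [k [jk ks HQ]]]]].
- by left; apply/(has_nthP 0); exists k.
- by right; exists j, k.
- by exists 0, k.+1.
- by exists j.+1, k.+1.
Qed.

Lemma ex_triple_cons (Q : nat -> nat -> nat -> bool) (y : nat) s :
  (exists i j k, [/\ i < j, j < k, k < size (y :: s) &
     Q (nth 0 (y :: s) i) (nth 0 (y :: s) j) (nth 0 (y :: s) k)]) <->
  (exists j k, [/\ j < k, k < size s & Q y (nth 0 s j) (nth 0 s k)]) \/
  (exists i j k, [/\ i < j, j < k, k < size s & Q (nth 0 s i) (nth 0 s j) (nth 0 s k)]).
Proof.
split=> [[[|i] [[|j] [[|k] [ij jk ks HQ]]]] //
        | [[j [k [jk ks HQ]]] | [i [j [k [ij jk ks HQ]]]]]].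
- by left; exists j, k.
- by right; exists i, j, k.
- by exists 0, j.+1, k.+1.
- by exists i.+1, j.+1, k.+1.
Qed.

Lemma pairwise_filterP (r : rel nat) (p : pred nat) s :
  pairwise (fun x y => ~~ r x y) [seq z <- s | p z] <->
  ~ exists j k, [/\ j < k, k < size s &
      p (nth 0 s j) && p (nth 0 s k) && r (nth 0 s j) (nth 0 s k)].
Proof.
elim: s => [|y s IH]; first by split => // _ [j [k [_ ks _]]].
have split_pair := ex_pair_cons (fun a c => p a && p c && r a c) y s.
have head : pairwise (fun x y => ~~ r x y) [seq z <- y :: s | p z] =
    ~~ has (fun z => p y && p z && r y z) s &&
    pairwise (fun x y => ~~ r x y) [seq z <- s | p z].
  rewrite /=; case: (p y) => /=; last by rewrite (@eq_has _ _ pred0) ?has_pred0.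
  congr (_ && _); elim: s {IH split_pair} => //= z s IHs.
  by case: (p z); rewrite /= IHs //; case: (r y z).
rewrite head; split.
  by case/andP=> /negP H1 /IH H2 /split_pair [A | A]; [exact: H1 | exact: H2].
move=> H; apply/andP; split.
  by apply/negP => A; apply: H; apply/split_pair; left.
by apply/IH => A; apply: H; apply/split_pair; right.
Qed.

Lemma avoidsP b s : avoids b s <->
  ~ exists i j k, [/\ i < j, j < k, k < size s &
    (nth 0 s j < nth 0 s i) && (nth 0 s k < nth 0 s i) &&
    storage_order b (nth 0 s k) (nth 0 s j)].
Proof.
elim: s => [|y s IH]; first by split => // _ [i [j [k [_ _ ks _]]]].
have split_triple := ex_triple_cons
  (fun a c d => (c < a) && (d < a) && storage_order b d c) y s.
have head := pairwise_filterP (fun a c => storage_order b c a) (fun z => z < y) s.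
rewrite /= /compatible; split.
  by case/andP=> /head H1 /IH H2 /split_triple [A | A]; [exact: H1 | exact: H2].
move=> H; apply/andP; split.
  by apply/head => A; apply: H; apply/split_triple; left.
by apply/IH => A; apply: H; apply/split_triple; right.
Qed.

Lemma avoids312E s : avoids312 s <-> avoids false s.
Proof.
rewrite avoidsP /avoids312; split=> H [i [j [k [ij jk ks HQ]]]]; apply: H;
  by exists i, j, k; split => //; move: HQ => /=; lia.
Qed.

Lemma avoids321E s : avoids321 s <-> avoids true s.
Proof.
rewrite avoidsP /avoids321; split=> H [i [j [k [ij jk ks HQ]]]]; apply: H;
  by exists i, j, k; split => //; move: HQ => /=; lia.
Qed.

Section ExecEncode.
Variable b : bool.

Definition encode_spec (s : seq nat) : Prop :=
  forall st c m out, uniq s -> perm_eq s (st ++ iota c m) ->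
  all (fun y => y < c) st -> pairwise (storage_order b) st ->
  (exec b (encode c s) (iota c m) st out == Some (out ++ s)) =
  avoids b s && ([seq y <- s | y \in st] == st).

Lemma encode_spec_nil : encode_spec [::].
Proof.
move=> st c m out _ /perm_size; rewrite size_cat size_iota /= => Hsize _ _.
have -> : st = [::] by apply: size0nil; lia.
by rewrite /= cats0 eqxx.
Qed.

(** An entry x below the next input must be popped: this succeeds iff x is
    the head of the storage. *)
Lemma encode_spec_pop x s st c m out : encode_spec s -> x < c ->
  uniq (x :: s) -> perm_eq (x :: s) (st ++ iota c m) ->
  all (fun y => y < c) st -> pairwise (storage_order b) st ->
  (exec b (encode c (x :: s)) (iota c m) st out == Some (out ++ x :: s)) =
  avoids b (x :: s) && ([seq y <- x :: s | y \in st] == st).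
Proof.
move=> IH xc /andP[x_s us] Hperm Hst Hsorted.
have x_st : x \in st.
  by have := perm_mem Hperm x; rewrite mem_head mem_cat mem_iota leqNgt xc orbF.
case: st Hperm Hst Hsorted x_st => [|y st] // Hperm.
rewrite [all _ _]/= [pairwise _ _]/= => /andP[_ Hst] /andP[_ Hsorted] x_st.
rewrite /= xc /= x_st.
have [Eyx | y_neq_x] := eqVneq y x; last first.
  have x_neq_y : (x == y) = false by rewrite eq_sym (negbTE y_neq_x).
  rewrite eqseq_cons x_neq_y andbF exec_out.
  case: (exec _ _ _ _ _) => //= t; apply/negbTE; apply: contra y_neq_x => /eqP [].
  by rewrite cat_rcons => /eqP; rewrite eqseq_cat // eqxx /= eqseq_cons => /andP[].
subst y; have Hperm' : perm_eq s (st ++ iota c m) by rewrite -(perm_cons x).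
rewrite -cat_rcons (IH st c m (rcons out x) us Hperm' Hst Hsorted) eqseq_cons eqxx /=.
have -> : [seq z <- s | z \in x :: st] = [seq z <- s | z \in st].
  apply: eq_in_filter => z zs; rewrite in_cons.
  by have -> : (z == x) = false by apply: contraNF x_s => /eqP <-.
case Ef: ([seq z <- s | z \in st] == st); rewrite ?andbF ?andbT //.
(* the later entries below x are exactly the stored ones, already in order *)
have -> : [seq z <- s | z < x] = [seq z <- [seq z <- s | z \in st] | z < x].
  rewrite -filter_predI; apply: eq_in_filter => z zs /=.
  case zx: (z < x); rewrite ?andbF //=; symmetry.
  have : z \in st ++ iota c m by rewrite -(perm_mem Hperm').
  by rewrite mem_cat mem_iota; case/orP => // /andP[cz _]; lia.
rewrite (eqP Ef) (_ : compatible b _ = true) //.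
by apply: pairwise_filter; apply: storage_order_compatible.
Qed.

(** An entry x >= c is reached by pushing the block c, ..., x - 1 and
    transferring x; the entries below x that follow are then exactly the
    stored ones. *)
Lemma encode_spec_push x s st c m out : encode_spec s -> c <= x ->
  uniq (x :: s) -> perm_eq (x :: s) (st ++ iota c m) ->
  all (fun y => y < c) st -> pairwise (storage_order b) st ->
  (exec b (encode c (x :: s)) (iota c m) st out == Some (out ++ x :: s)) =
  avoids b (x :: s) && ([seq y <- x :: s | y \in st] == st).
Proof.
move=> IH x_ge /andP[x_s us] Hperm Hst Hsorted.
have x_lt : x < c + m.
  have := perm_mem Hperm x; rewrite mem_head mem_cat mem_iota.
  by case/esym/orP => [/(allP Hst) /= | /andP[]]; lia.
set k := x - c; set st' := store_block b st c k.
have Hm : m = k + (m - k - 1).+1 by rewrite /k; lia.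
have Hck : c + k = x by rewrite /k; lia.
have Hperm' : perm_eq s (st' ++ iota x.+1 (m - k - 1)).
  rewrite -(perm_cons x) (perm_trans Hperm) // {1}Hm iotaD Hck /= catA.
  by rewrite (perm_catCA _ [:: x]) /= perm_cons perm_cat2r perm_sym store_block_perm.
have Hst' : all (fun y => y < x.+1) st'.
  apply/allP=> z; rewrite (perm_mem (store_block_perm _ _ _ _)) mem_cat mem_iota.
  by case/orP=> [/(allP Hst) /=|]; lia.
have sorted' : pairwise (storage_order b) st' by apply: store_block_sorted.
rewrite /= ltnNge x_ge /= {1}Hm exec_Us Hck /= -cat_rcons.
rewrite (IH st' x.+1 _ (rcons out x) us Hperm' Hst' sorted').
have -> : (x \in st) = false by apply/negP => /(allP Hst) /=; lia.
have below_x : [seq z <- s | z < x] = [seq z <- s | z \in st'].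
  apply: eq_in_filter => z zs; have z_neq_x : z != x by apply: contraNneq x_s => <-.
  have : z \in st' ++ iota x.+1 (m - k - 1) by rewrite -(perm_mem Hperm').
  rewrite mem_cat mem_iota; case/orP => [z_st' | /andP[xz _]].
  - by rewrite z_st'; have /= := allP Hst' z z_st'; move: z_neq_x => /=; lia.
  - have -> : (z \in st') = false by apply/negP => /(allP Hst') /=; lia.
    by apply/negbTE; rewrite -leqNgt ltnW.
have sub_st' : {subset st' <= s} by move=> z z_st'; rewrite (perm_mem Hperm') mem_cat z_st'.
rewrite below_x -(filter_storage_order us sorted' sub_st').
case Ef: ([seq z <- s | z \in st'] == st'); last by rewrite andbF.
(* the stored entries st keep their order inside the block-extended storage *)
rewrite andbT /=; suff -> : [seq z <- s | z \in st] == st by rewrite andbT.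
apply/eqP; rewrite -{2}(filter_store_block b k Hst) -/st' -(eqP Ef) -filter_predI.
apply: eq_in_filter => z zs /=; case z_st: (z \in st) => //=; symmetry.
by rewrite (perm_mem (store_block_perm _ _ _ _)) mem_cat z_st.
Qed.

Lemma exec_encode s : encode_spec s.
Proof.
elim: s => [|x s IH]; first exact: encode_spec_nil.
move=> st c m out; case: (ltnP x c) => [xc | x_ge].
- exact: encode_spec_pop.
- exact: encode_spec_push.
Qed.
End ExecEncode.

(** Replacing every H by the peak U D turns a weak Dyck path into an ordinary
    one; on peakless paths this is inverted by [compress]. *)
Fixpoint expand (P : seq step) : seq step :=
  match P with
  | [::] => [::]
  | H :: P' => U :: D :: expand P'
  | x :: P' => x :: expand P'
  end.

Fixpoint compress (w : seq step) : seq step :=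
  match w with
  | U :: D :: w' => H :: compress w'
  | x :: w' => x :: compress w'
  | [::] => [::]
  end.

Lemma compress_cons x w : compress (x :: w) =
  if (x == U) && (nth H w 0 == D) then H :: compress (behead w) else x :: compress w.
Proof. by case: x; case: w => [|[] w]. Qed.

Lemma compress_expand P : no_peak P -> compress (expand P) = P.
Proof.
elim: P => [|x P IH] //= /andP[Hx Hp].
have head_expand : (nth H (expand P) 0 == D) = (nth H P 0 == D).
  by case: P {IH Hx Hp} => [|[] P].
case: x Hx => Hx; rewrite [expand _]/= compress_cons ?head_expand /=.
- by move: Hx => /= /negbTE ->; rewrite IH.
- by rewrite IH.
- by rewrite IH.
Qed.

Lemma compress_props w : H \notin w ->
  [/\ expand (compress w) = w, no_peak (compress w) &
      (nth H (compress w) 0 == D) = (nth H w 0 == D)].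
Proof.
elim: {w}(size w).+1 {-2}w (ltnSn (size w)) => // N IHN [|x w] // Hs.
have {}Hs : size w < N by exact: Hs.
rewrite in_cons negb_or => /andP[Hx Hw]; rewrite compress_cons.
case: x Hx => //= _; last by have [-> -> _] := IHN w Hs Hw.
case: w Hs Hw => [|y w] Hs; first by move=> _.
rewrite in_cons negb_or => /andP[Hy Hw].
case: y Hy Hs => //= _ Hs.
- have Uw_noH : H \notin U :: w by rewrite in_cons negb_or Hw.
  by have [-> -> ->] := IHN (U :: w) Hs Uw_noH.
- have Hs' : size w < N by move: Hs => /=; lia.
  by have [-> -> _] := IHN w Hs' Hw.
Qed.

Lemma expand_noH P : H \notin expand P.
Proof. by elim: P => [|[] P IH] //=; rewrite !in_cons /= IH. Qed.

Lemma dyck_from_expand h P : dyck_from h (expand P) = dyck_from h P.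
Proof. by elim: P h => [|[] P IH] h //=; rewrite IH. Qed.

Lemma cU_expand P : cU (expand P) = cUH P.
Proof. by elim: P => [|[] P IH] //=; rewrite IH. Qed.

Lemma size_noH w : H \notin w -> size w = cU w + cD w.
Proof.
by elim: w => [|[] w IH] //=; rewrite in_cons /= => /IH ->;
  rewrite ?add0n ?add1n ?addSn ?addnS.
Qed.

Fixpoint dyck_words (k h a : nat) : seq (seq step) :=
  match k with
  | 0 => if (h == 0) && (a == 0) then [:: [::]] else [::]
  | k'.+1 => (if a is a'.+1 then map (cons U) (dyck_words k' h.+1 a') else [::]) ++
             (if h is h'.+1 then map (cons D) (dyck_words k' h' a) else [::])
  end.

Lemma mem_dyck_words k h a w : (w \in dyck_words k h a) =
  [&& size w == k, H \notin w, dyck_from h w & cU w == a].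
Proof.
elim: k h a w => [|k IH] h a w /=.
  by case: w => [|x w] /=; [case: h; case: a | case: (_ && _); rewrite ?inE].
case: w => [|x w].
  rewrite mem_cat; apply/negbTE; rewrite negb_or; apply/andP; split;
    [case: a => [|a] // | case: h => [|h] //]; by apply/mapP => -[].
have mem_cons y L : (x :: w \in map (cons y) L) = (x == y) && (w \in L).
  by apply/mapP/andP => [[v vL [-> ->]] | [/eqP -> wL]] //; exists w.
rewrite mem_cat; case: a => [|a]; case: h => [|h]; rewrite ?mem_cons ?in_nil ?orbF ?IH;
  case: x {mem_cons} => /=; rewrite ?in_cons /= ?andbF ?orbF ?add0n ?add1n ?eqSS //= ?andbF.
Qed.

Lemma uniq_dyck_words k h a : uniq (dyck_words k h a).
Proof.
elim: k h a => [|k IH] h a /=; first by case: (_ && _).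
have cons_inj y : injective (cons y : seq step -> seq step) by move=> ? ? [].
rewrite cat_uniq; apply/and3P; split.
- by case: a => // a; rewrite map_inj_uniq.
- case: a => [|a]; first by apply/hasPn.
  case: h => [|h] //.
  by apply/hasPn => v /mapP [v1 _ ->]; apply/mapP => [[v2 _ []]].
- by case: h => // h; rewrite map_inj_uniq.
Qed.

Lemma size_dyck_words k : forall h a, k = a.*2 + h ->
  k.+1 * size (dyck_words k h a) = h.+1 * 'C(k.+1, a).
Proof.
elim: k => [|k IH] h a Hk /=.
  by have [-> ->] : h = 0 /\ a = 0 by lia.
rewrite size_cat; case: a Hk => [|a]; case: h => [|h] Hk //=.
- (* only down steps *)
  rewrite size_map add0n bin0.
  have rec_D := IH h 0 ltac:(lia); rewrite bin0 in rec_D.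
  have one : size (dyck_words k h 0) = 1.
    by apply/eqP; rewrite -(eqn_pmul2l (ltn0Sn k)) rec_D (_ : k = h) ?muln1 //; lia.
  by rewrite one; lia.
- (* from height 0 the first step is up *)
  rewrite size_map addn0.
  have rec_U := IH 1 a ltac:(lia).
  have absorb := mul_bin_diag k.+2 a.
  apply/eqP; rewrite -(eqn_pmul2l (ltn0Sn k)) mul1n; apply/eqP.
  simpl in absorb; nia.
- (* first step up or down: Pascal's rule and absorption *)
  rewrite !size_map.
  have rec_U := IH h.+2 a ltac:(lia).
  have rec_D := IH h a.+1 ltac:(lia).
  have pascal := binS k.+1 a.
  have absorb := mul_bin_left k.+1 a.
  rewrite (_ : k.+1 - a = a + h + 3) in absorb; last by lia.
  apply/eqP; rewrite -(eqn_pmul2l (ltn0Sn k)) pascal; apply/eqP.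
  nia.
Qed.

(** |P_n| = C_n: [expand] is a bijection from P_n onto the Dyck words of
    length 2n, counted by the ballot formula. *)
Lemma count_Pn n : exists L : seq (seq step),
  [/\ uniq L, (forall P, P \in L <-> inPn n P) & size L = catalan n].
Proof.
exists (map compress (dyck_words n.*2 0 n)); split.
- rewrite map_inj_in_uniq; first exact: uniq_dyck_words.
  move=> w1 w2; rewrite !mem_dyck_words => /and4P[_ H1 _ _] /and4P[_ H2 _ _] E.
  by have [<- _ _] := compress_props H1; have [<- _ _] := compress_props H2; rewrite E.
- move=> P; split.
    case/mapP => w; rewrite mem_dyck_words => /and4P[_ Hw Hwd /eqP Hc] ->.
    have [expandK no_peak_w _] := compress_props Hw.
    by apply/inPnE; split; [rewrite -dyck_from_expand expandK | | rewrite -cU_expand expandK].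
  case/inPnE => Hw Hp Hc; apply/mapP; exists (expand P); last by rewrite compress_expand.
  have Hd : dyck_from 0 (expand P) by rewrite dyck_from_expand.
  have cD_n : cD (expand P) = n by rewrite -(dyck_from_count Hd) cU_expand Hc.
  have size_n : size (expand P) = n.*2.
    by rewrite (size_noH (expand_noH P)) cU_expand Hc cD_n addnn.
  by rewrite mem_dyck_words expand_noH Hd cU_expand Hc size_n !eqxx.
- rewrite size_map /catalan.
  have ballot := @size_dyck_words n.*2 0 n (esym (addn0 _)).
  have -> : 'C(n.*2.+1, n.+1) = 'C(n.*2.+1, n).
    by rewrite -bin_sub; [congr 'C(_, _); lia | lia].
  by rewrite -(mul1n 'C(_, _)) -ballot mulKn.
Qed.

Definition output (b : bool) (n : nat) (P : seq step) : seq nat :=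
  odflt [::] (exec b P (iota 1 n) [::] [::]).

Lemma SmapE n P : Smap n P = output false n P.
Proof. by rewrite /Smap /run_stack exec_stackE. Qed.

Lemma QmapE n P : Qmap n P = output true n P.
Proof. by rewrite /Qmap /run_queue exec_queueE. Qed.

Section Bijection.
Variables (b : bool) (n : nat).

Lemma run_inPn P : inPn n P ->
  [/\ exec b P (iota 1 n) [::] [::] = Some (output b n P),
      encode 1 (output b n P) = P & is_perm n (output b n P)].
Proof.
case/inPnE => Hd Hp Hc.
have [t [Et Pt permt]] := @exec_path b P 1 n [::] [::] Hd Hp Hc isT.
by rewrite /output Et.
Qed.

Lemma encode_inPn s : is_perm n s -> inPn n (encode 1 s).
Proof.
move=> Hs; apply/inPnE.
by have [] // := @encode_path s [::] 1 n; rewrite (perm_uniq Hs) iota_uniq.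
Qed.

Lemma output_encode s : is_perm n s ->
  (exec b (encode 1 s) (iota 1 n) [::] [::] == Some s) = avoids b s.
Proof.
move=> Hs; have us : uniq s by rewrite (perm_uniq Hs) iota_uniq.
rewrite (@exec_encode b s [::] 1 n [::] us Hs isT isT).
by rewrite (_ : [seq y <- s | y \in [::]] = [::]) ?andbT //; elim: s {Hs us}.
Qed.

Lemma output_avoids P : inPn n P -> avoids b (output b n P).
Proof.
move=> HP; have [Eout Penc Hperm] := run_inPn HP.
by rewrite -(output_encode Hperm) Penc Eout.
Qed.

Lemma output_inj P1 P2 : inPn n P1 -> inPn n P2 ->
  output b n P1 = output b n P2 -> P1 = P2.
Proof.
move=> H1 H2 E; have [_ enc1 _] := run_inPn H1; have [_ enc2 _] := run_inPn H2.
by rewrite -enc1 -enc2 E.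
Qed.

Lemma output_encodeK s : is_perm n s -> avoids b s -> output b n (encode 1 s) = s.
Proof. by move=> Hs; rewrite -(output_encode Hs) /output => /eqP ->. Qed.

Lemma count_avoiders : exists L : seq (seq nat),
  [/\ uniq L, (forall s, s \in L <-> is_perm n s /\ avoids b s) & size L = catalan n].
Proof.
have [L [uL mL sL]] := count_Pn n.
exists (map (output b n) L); split; last by rewrite size_map.
- by rewrite map_inj_in_uniq // => P1 P2 /mL H1 /mL H2; apply: output_inj.
move=> s; split.
  case/mapP => P /mL HP ->; have [_ _ Hperm] := run_inPn HP.
  by split; last exact: output_avoids.
case=> Hs Ha; apply/mapP; exists (encode 1 s); first by apply/mL; apply: encode_inPn.
by rewrite output_encodeK.
Qed.
End Bijection.

Lemma transfer_bijection b1 b2 n : exists f : seq nat -> seq nat,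
  [/\ (forall P, inPn n P -> f (output b1 n P) = output b2 n P),
      (forall s, is_perm n s -> avoids b1 s -> is_perm n (f s) /\ avoids b2 (f s)),
      (forall s1 s2, is_perm n s1 -> avoids b1 s1 -> is_perm n s2 -> avoids b1 s2 ->
         f s1 = f s2 -> s1 = s2) &
      (forall t, is_perm n t -> avoids b2 t ->
         exists s, [/\ is_perm n s, avoids b1 s & f s = t])].
Proof.
exists (fun s => output b2 n (encode 1 s)); split.
- by move=> P HP; have [_ -> _] := run_inPn b1 HP.
- move=> s Hs _; have HP := encode_inPn Hs; have [_ _ Hperm] := run_inPn b2 HP.
  by split; last exact: output_avoids.
- move=> s1 s2 H1 A1 H2 A2 /(output_inj (encode_inPn H1) (encode_inPn H2)) E.
  by rewrite -(output_encodeK H1 A1) -(output_encodeK H2 A2) E.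
- move=> t Ht At; have HP := encode_inPn Ht; have [_ Penc Hperm] := run_inPn b1 HP.
  exists (output b1 n (encode 1 t)); split => //; first exact: output_avoids.
  by rewrite Penc output_encodeK.
Qed.

Lemma stack_bijection n :
  [/\ (forall P, inPn n P -> run_stack n P <> None /\ is_perm n (Smap n P)),
      (forall P, inPn n P -> avoids312 (Smap n P)),
      (forall P1 P2, inPn n P1 -> inPn n P2 -> Smap n P1 = Smap n P2 -> P1 = P2) &
      (forall s, is_perm n s -> avoids312 s -> exists P, inPn n P /\ Smap n P = s)].
Proof.
split=> [P HP | P HP | P1 P2 H1 H2 | s Hs /avoids312E Ha]; rewrite ?SmapE.
- have [Eout _ Hperm] := run_inPn false HP.
  by rewrite /run_stack exec_stackE Eout.
- by apply/avoids312E; apply: output_avoids.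
- exact: output_inj.
- exists (encode 1 s); split; first exact: encode_inPn.
  by rewrite ?SmapE ?QmapE output_encodeK.
Qed.

Lemma queue_bijection n :
  [/\ (forall P, inPn n P -> run_queue n P <> None /\ is_perm n (Qmap n P)),
      (forall P, inPn n P -> avoids321 (Qmap n P)),
      (forall P1 P2, inPn n P1 -> inPn n P2 -> Qmap n P1 = Qmap n P2 -> P1 = P2) &
      (forall s, is_perm n s -> avoids321 s -> exists P, inPn n P /\ Qmap n P = s)].
Proof.
split=> [P HP | P HP | P1 P2 H1 H2 | s Hs /avoids321E Ha]; rewrite ?QmapE.
- have [Eout _ Hperm] := run_inPn true HP.
  by rewrite /run_queue exec_queueE Eout.
- by apply/avoids321E; apply: output_avoids.
- exact: output_inj.
- exists (encode 1 s); split; first exact: encode_inPn.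
  by rewrite ?SmapE ?QmapE output_encodeK.
Qed.

Theorem mainTheorem5 (n : nat) (hn : 0 < n) :
  (* stack: always executable, yields a permutation, bijection onto Av(312) *)
  [/\ (forall P, inPn n P -> run_stack n P <> None /\ is_perm n (Smap n P)),
      (forall P, inPn n P -> avoids312 (Smap n P)),
      (forall P1 P2, inPn n P1 -> inPn n P2 -> Smap n P1 = Smap n P2 -> P1 = P2) &
      (forall s, is_perm n s -> avoids312 s -> exists P, inPn n P /\ Smap n P = s)] /\
  (* queue: always executable, yields a permutation, bijection onto Av(321) *)
  [/\ (forall P, inPn n P -> run_queue n P <> None /\ is_perm n (Qmap n P)),
      (forall P, inPn n P -> avoids321 (Qmap n P)),
      (forall P1 P2, inPn n P1 -> inPn n P2 -> Qmap n P1 = Qmap n P2 -> P1 = P2) &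
      (forall s, is_perm n s -> avoids321 s -> exists P, inPn n P /\ Qmap n P = s)] /\
  (* |P_n| = C_n *)
  (exists L : seq (seq step),
      [/\ uniq L, (forall P, P \in L <-> inPn n P) & size L = catalan n]) /\
  (* number of 321-avoiding permutations of {1..n} is C_n *)
  (exists L : seq (seq nat),
      [/\ uniq L, (forall s, s \in L <-> is_perm n s /\ avoids321 s)
        & size L = catalan n]) /\
  (* Q o S^{-1} is a bijection Av_n(312) -> Av_n(321) *)
  (exists f : seq nat -> seq nat,
      [/\ (forall P, inPn n P -> f (Smap n P) = Qmap n P),
          (forall s, is_perm n s -> avoids312 s -> is_perm n (f s) /\ avoids321 (f s)),
          (forall s1 s2, is_perm n s1 -> avoids312 s1 -> is_perm n s2 -> avoids312 s2 ->
                f s1 = f s2 -> s1 = s2) &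
          (forall t, is_perm n t -> avoids321 t ->
                exists s, [/\ is_perm n s, avoids312 s & f s = t])]).
Proof.
split; first exact: stack_bijection.
split; first exact: queue_bijection.
split; first exact: count_Pn.
split.
  have [L [uL mL sL]] := count_avoiders true n.
  by exists L; split=> // s; rewrite mL avoids321E.
have [f [fS fav finj fsurj]] := transfer_bijection false true n.
exists f; split.
- by move=> P HP; rewrite SmapE QmapE fS.
- by move=> s Hs /avoids312E /(fav s Hs) [? /avoids321E].
- by move=> s1 s2 H1 /avoids312E A1 H2 /avoids312E A2; apply: finj.
- move=> t Ht /avoids321E /(fsurj t Ht) [s [Hs As <-]].
  by exists s; split => //; apply/avoids312E.
Qed.
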